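(* Let $n\ge1$, let $\Omega$ be an open subset of $\mathbb{R}^n$, and let $p\in[1,\infty)$ and $T>0$ be constants. Suppose $u\in L^p(\Omega\times(0,T))$ and $u(x,t)=\int_{\mathbb{R}^n}\Phi(x-y,t)\,d\mu(y)$ for some finite positive Borel measure $\mu$ on $\mathbb{R}^n$. Then for each compact subset $K$ of $\Omega$, $$\max_{x\in K}u(x,t)=o\big(t^{-\frac{n+2}{2p}}\big)\quad\text{as }t\to0^+.$$
   Context: $\Phi$ is the heat kernel: $\Phi(x,t)=(4\pi t)^{-n/2}e^{-|x|^2/(4t)}$ for $t>0$ and $\Phi(x,t)=0$ for $t\le0$. *)

From HB Require Import structures.
From mathcomp Require Import all_boot all_order all_algebra.
From mathcomp Require Import all_classical all_reals all_analysis.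
Set Implicit Arguments. Unset Strict Implicit. Unset Printing Implicit Defensive.
Import Order.TTheory GRing.Theory Num.Theory.
Import numFieldNormedType.Exports.
Local Open Scope classical_set_scope.
Local Open Scope ring_scope.

(* Points of R^n are row vectors 'rV[R]_n (product = Euclidean topology). *)

Definition sqnorm (R : realType) (n : nat) (x : 'rV[R]_n) : R :=
  \sum_(i < n) (x ord0 i) ^+ 2.

Definition heat_kernel (R : realType) (n : nat) (x : 'rV[R]_n) (t : R) : R :=
  if 0 < t then (4 * pi * t) `^ (- (n%:R / 2)) * expR (- sqnorm x / (4 * t))
  else 0.

Definition borelRn (R : realType) (n : nat) := g_sigma_algebraType (@open 'rV[R]_n).

(* Lebesgue integral over R^n of a nonnegative function, as the iterated
   integral dx_1 ... dx_n w.r.t. 1-dimensional Lebesgue measure (this equals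
   the integral w.r.t. n-dimensional Lebesgue measure by Tonelli). *)
Fixpoint lebesgue_iint (R : realType) (n : nat) : ('rV[R]_n -> \bar R) -> \bar R :=
  match n with
  | 0%N => fun f => f 0
  | m.+1 => fun f =>
      (\int[@lebesgue_measure R]_(a in [set: R])
          lebesgue_iint (fun v : 'rV[R]_m =>
            f (\row_(i < m.+1) (if unlift ord0 i is Some j then v ord0 j else (a : R)))))%E
  end.

(* A Harnack inequality for the heat kernel: if |z - x|^2 <= t and 2t <= s <= 3t, then
   Phi(z - y, s) >= c_n Phi(x - y, t) with c_n = 3^(-n/2) e^(-1/4), so integrating in mu gives
   u(z, s) >= c_n u(x, t).  For x in K and t small, the cube of half-side sqrt(t)/n around x
   lies in Omega, hence the integral of |u|^p over Omega x [2t, 3t) is at least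
   const * u(x, t)^p * t^((n+2)/2).  Since u is in L^p(Omega x (0, T)), that integral tends
   to 0 as t -> 0+, which is the claim. *)

From HB Require Import structures.
From mathcomp Require Import all_boot all_order all_algebra.
From mathcomp Require Import all_classical all_reals all_analysis.
From mathcomp Require Import ring lra.
Set Implicit Arguments. Unset Strict Implicit. Unset Printing Implicit Defensive.
Import Order.TTheory GRing.Theory Num.Theory.
Import numFieldNormedType.Exports.
Local Open Scope classical_set_scope.
Local Open Scope ring_scope.

Section ereal_sup_addition.
Local Open Scope ereal_scope.
Variable R : realType.

Lemma ge0_ereal_supD_le (X Y : set \bar R) (z : \bar R) :
  (forall x, X x -> 0 <= x) -> (forall y, Y y -> 0 <= y) ->
  X !=set0 -> Y !=set0 -> (forall x y, X x -> Y y -> x + y <= z) ->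
  ereal_sup X + ereal_sup Y <= z.
Proof.
move=> X0 Y0 [x0 Xx0] [y0 Yy0] XYz.
have [->|zoo] := eqVneq z +oo; first by rewrite leey.
have fin_le_z w : 0 <= w -> w <= z -> w \is a fin_num.
  by move=> w0 wz; rewrite ge0_fin_numE // (le_lt_trans wz) // ltey.
have Yfin y : Y y -> y \is a fin_num.
  move=> Yy; apply: fin_le_z (Y0 _ Yy) (le_trans _ (XYz _ _ Xx0 Yy)).
  by rewrite leeDr ?X0.
have supX_le y : Y y -> ereal_sup X <= z - y.
  by move=> Yy; apply: ge_ereal_sup => x Xx; rewrite leeBrDr ?Yfin ?XYz.
have supX0 : 0 <= ereal_sup X := le_trans (X0 _ Xx0) (ereal_sup_ubound Xx0).
have supXfin : ereal_sup X \is a fin_num.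
  apply: fin_le_z supX0 (le_trans (supX_le _ Yy0) _).
  by rewrite leeBlDr ?Yfin // leeDl ?Y0.
rewrite addeC -leeBrDr //; apply: ge_ereal_sup => y Yy.
by rewrite leeBrDr // addeC -leeBrDr ?Yfin ?supX_le.
Qed.

End ereal_sup_addition.

(* The integrability hypothesis of the theorem concerns functions that are not known to be
   measurable, so the facts about integrals of nonnegative functions below are proved from the
   definition as a supremum over simple minorants, without measurability assumptions. *)
Section ge0_integral_nonmeasurable.
Local Open Scope ereal_scope.
Context d (T : measurableType d) (R : realType).
Variable mu : {measure set T -> \bar R}.
Import HBNNSimple.

Lemma le_ge0_integral (D : set T) (f g : T -> \bar R) :
  (forall x, D x -> 0 <= f x) -> (forall x, D x -> f x <= g x) ->
  \int[mu]_(x in D) f x <= \int[mu]_(x in D) g x.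
Proof.
move=> f0 fg.
have g0 x : D x -> 0 <= g x by move=> Dx; exact: le_trans (f0 _ Dx) (fg _ Dx).
rewrite (ge0_integralE _ f0) (ge0_integralE _ g0).
apply: ereal_sup_le => _ [h /= hf <-]; exists h => //= x.
by apply: le_trans (hf x) _; rewrite !patchE; case: ifP => // /set_mem /fg.
Qed.

Lemma ge0_le_integral_subset (A B : set T) (f : T -> \bar R) :
  A `<=` B -> (forall x, B x -> 0 <= f x) ->
  \int[mu]_(x in A) f x <= \int[mu]_(x in B) f x.
Proof.
move=> AB f0; rewrite [leLHS]integral_mkcond [leRHS]integral_mkcond.
apply: le_ge0_integral => x _; rewrite !patchE.
  by case: ifP => // /set_mem /AB /f0.
case: ifP => [/set_mem /AB Bx|_]; first by rewrite mem_set.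
by case: ifP => // /set_mem /f0.
Qed.

Lemma ge0_integralZl_ge (D : set T) (f : T -> \bar R) (k : R) :
  (0 <= k)%R -> (forall x, D x -> 0 <= f x) ->
  k%:E * \int[mu]_(x in D) f x <= \int[mu]_(x in D) (k%:E * f x).
Proof.
move=> k0 f0.
have kf0 x : D x -> 0 <= k%:E * f x by move=> Dx; rewrite mule_ge0 ?f0.
rewrite (ge0_integralE _ f0) (ge0_integralE _ kf0) -ereal_supZl //; last first.
  apply/set0P; exists (sintegral mu (@nnsfun0 _ T R)); exists nnsfun0 => //= x.
  by rewrite patchE; case: ifP => // /set_mem /f0.
apply: ereal_sup_le => _ [_ [h hf <-] <-].
exists (scale_nnsfun h k0); last by rewrite sintegralrM.
move=> x /=; have := hf x; rewrite !patchE EFinM; case: ifP => _.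
  exact: lee_wpmul2l.
by move=> h0; rewrite mule_ge0_le0.
Qed.

Lemma ge0_integral_setU_ge (A B : set T) (f : T -> \bar R) :
  (forall x, (A `|` B) x -> 0 <= f x) -> A `&` B = set0 ->
  \int[mu]_(x in A) f x + \int[mu]_(x in B) f x <= \int[mu]_(x in A `|` B) f x.
Proof.
move=> f0 AB0.
have fA0 x : A x -> 0 <= f x by move=> Ax; apply: f0; left.
have fB0 x : B x -> 0 <= f x by move=> Bx; apply: f0; right.
have nnsfun0_le (D : set T) : (forall x, D x -> 0 <= f x) ->
    forall x, ((@nnsfun0 _ T R) x)%:E <= (f \_ D) x.
  by move=> fD0 x; rewrite patchE; case: ifP => // /set_mem /fD0.
rewrite (ge0_integralE _ fA0) (ge0_integralE _ fB0) (ge0_integralE _ f0).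
apply: ge0_ereal_supD_le.
- by move=> _ [h _ <-]; exact: sintegral_ge0.
- by move=> _ [h _ <-]; exact: sintegral_ge0.
- by exists (sintegral mu nnsfun0), nnsfun0 => //; exact: nnsfun0_le.
- by exists (sintegral mu nnsfun0), nnsfun0 => //; exact: nnsfun0_le.
move=> _ _ [h1 h1f <-] [h2 h2f <-]; rewrite -sintegralD.
apply: ereal_sup_ubound; exists (add_nnsfun h1 h2) => //= x.
move: (h1f x) (h2f x); rewrite !patchE EFinD.
have [Ax|nAx] := pselect (A x); have [Bx|nBx] := pselect (B x).
- by have : (A `&` B) x by []; rewrite AB0.
- rewrite (mem_set Ax) (memNset nBx) mem_set; last by left.
  by move=> h1le h2le; rewrite -[f x]adde0 leeD.
- rewrite (memNset nAx) (mem_set Bx) mem_set; last by right.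
  by move=> h1le h2le; rewrite -[f x]add0e leeD.
- rewrite !memNset //; last by case.
  by move=> h1le h2le; rewrite -[point]adde0 leeD.
Qed.

End ge0_integral_nonmeasurable.

Section row_vectors.
Variables (R : realType) (n : nat).
Implicit Types x z : 'rV[R]_n.

Lemma row_ballP x z r :
  ball x r z <-> 0 < r /\ forall i, `|x ord0 i - z ord0 i| < r.
Proof.
rewrite /ball /= /mx_ball; split => -[r0 xz]; split => //.
  by move=> i; exact: xz ord0 i.
by move=> i j; rewrite (ord1 i); exact: xz.
Qed.

Lemma sqnorm_ge0 x : 0 <= sqnorm x.
Proof. by apply: sumr_ge0 => i _; exact: sqr_ge0. Qed.

Lemma sqnormD_le x z : sqnorm (x + z) <= 2 * sqnorm x + 2 * sqnorm z.
Proof.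
rewrite /sqnorm !mulr_sumr -big_split /=; apply: ler_sum => i _.
by rewrite mxE; have := sqr_ge0 (x ord0 i - z ord0 i); nra.
Qed.

Lemma sqnorm_ball x z rho : ball x rho z -> sqnorm (z - x) <= n%:R * rho ^+ 2.
Proof.
move=> /row_ballP[_ xz]; rewrite /sqnorm.
apply: (@le_trans _ _ (\sum_(i < n) rho ^+ 2)); last first.
  by rewrite sumr_const card_ord mulr_natl.
apply: ler_sum => i _; rewrite !mxE.
by have := xz i; rewrite ltr_norml => /andP[]; nra.
Qed.

End row_vectors.

Section lebesgue_iint.
Variable R : realType.

Lemma lebesgue_iint_ge0 n (f : 'rV[R]_n -> \bar R) :
  (forall v, 0 <= f v)%E -> (0 <= lebesgue_iint f)%E.
Proof.
elim: n f => [|m IH] f f0 /=; first exact: f0.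
by apply: integral_ge0 => a _; apply: IH => v.
Qed.

Lemma le_lebesgue_iint n (f g : 'rV[R]_n -> \bar R) : (forall v, 0 <= f v)%E ->
  (forall v, f v <= g v)%E -> (lebesgue_iint f <= lebesgue_iint g)%E.
Proof.
elim: n f g => [|m IH] f g f0 fg /=; first exact: fg.
apply: le_ge0_integral => a _; first by apply: lebesgue_iint_ge0 => v.
by apply: IH => v.
Qed.

Lemma ball_row_unlift m (x : 'rV[R]_m.+1) (v : 'rV[R]_m) (a rho : R) :
  ball x rho (\row_i (if unlift ord0 i is Some j then v ord0 j else a)) <->
  `|x ord0 ord0 - a| < rho /\ ball (\row_j x ord0 (lift ord0 j)) rho v.
Proof.
set r := \row_i _.
have r0 : r ord0 ord0 = a by rewrite mxE unlift_none.
have r_lift j : r ord0 (lift ord0 j) = v ord0 j by rewrite mxE liftK.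
rewrite !row_ballP; split => [[rho0 xr]|[xa [rho0 xv]]].
  by split; [rewrite -r0 | split => // j; rewrite mxE -r_lift].
split => // i; case: (unliftP ord0 i) => [j ->|->]; last by rewrite r0.
by rewrite r_lift; move: (xv j); rewrite mxE.
Qed.

Lemma lebesgue_iint_ball n (x : 'rV[R]_n) (rho c : R) : 0 <= c -> 0 < rho ->
  lebesgue_iint (fun v => (c * \1_(ball x rho) v)%:E) = (c * (2 * rho) ^+ n)%:E.
Proof.
move=> + rho0; elim: n x c => [|m IH] x c c0 /=.
  by rewrite indicE mem_set ?mulr1 ?expr0 //; apply/row_ballP; split => // -[].
pose x' := \row_j x ord0 (lift ord0 j).
transitivity (\int[@lebesgue_measure R]_(a in [set: R])
    ((c * (2 * rho) ^+ m) * \1_(`]x ord0 ord0 - rho, x ord0 ord0 + rho[%classic) a)%:E)%E.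
  apply: eq_integral => a _; rewrite mulrAC -(IH x') ?mulr_ge0 ?indic_ge0 //.
  congr lebesgue_iint; apply: funext => v; rewrite -mulrA !indicE -natrM mulnb.
  congr (c * (nat_of_bool _)%:R)%:E; apply/idP/andP.
    move=> /set_mem/ball_row_unlift[xa xv].
    by split; apply/mem_set => //=; rewrite in_itv /= -ltr_distlC.
  move=> [/set_mem /= + /set_mem xv].
  rewrite in_itv /= -ltr_distlC => xa.
  exact/mem_set/ball_row_unlift.
have k0 : 0 <= c * (2 * rho) ^+ m by rewrite mulr_ge0 // exprn_ge0 // mulr_ge0 // ltW.
rewrite (@integralZl_indic _ _ _ (@lebesgue_measure R) setT measurableT
  (fun=> `]x ord0 ord0 - rho, x ord0 ord0 + rho[%classic) (c * (2 * rho) ^+ m)) //;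
  last by rewrite ltNge k0.
rewrite integral_indic //= setIT lebesgue_measure_itv /= lte_fin ltrD2l gtrN //.
by rewrite -EFinD -EFinM exprS; congr EFin; ring.
Qed.

End lebesgue_iint.

Lemma compact_open_uniform_ball (R : realFieldType) (T : pseudoMetricType R)
    (K O : set T) : compact K -> open O -> K `<=` O ->
  exists2 r : R, 0 < r & forall x, K x -> ball x r `<=` O.
Proof.
move=> /compact_near_coveringP cK oO KO.
have : \forall r \near 0^'+, K `<=` (fun x => ball x r `<=` O).
  apply: cK => x Kx.
  have /nbhs_ballP[e /= e0 xeO] : nbhs x O by apply: open_nbhs_nbhs; split => //; exact: KO.
  exists (ball x (e / 2), [set r | 0 < r < e / 2]) => /=.
    split; first by apply: nbhsx_ballx; rewrite divr_gt0.
    exists (e / 2); first by rewrite /= divr_gt0.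
    move=> r /= + r0; rewrite r0 /ball /= sub0r normrN gtr0_norm //.
  move=> [x' r] /= [xx' /andP[r0 re]] z x'z.
  apply: xeO; rewrite [e]splitr; apply: (ball_triangle xx').
  by apply: le_ball x'z; rewrite ltW.
move=> /nbhs_ballP[e /= e0 eK].
exists (e / 2); first by rewrite divr_gt0.
apply: eK; last by rewrite divr_gt0.
by rewrite /ball /= sub0r normrN gtr0_norm ?divr_gt0 // ltr_pdivrMr // ltr_pMr // ltr1n.
Qed.

Section heat_kernel.
Variables (R : realType) (n : nat).
Implicit Types w v : 'rV[R]_n.

Definition heat_harnack_const : R := 3 `^ (- (n%:R / 2)) * expR (- (1 / 4)).

Lemma heat_harnack_const_gt0 : 0 < heat_harnack_const.
Proof. by rewrite mulr_gt0 ?powR_gt0 ?expR_gt0. Qed.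

Lemma heat_kernel_ge0 w t : 0 <= heat_kernel w t.
Proof. by rewrite /heat_kernel; case: ifP => // _; rewrite mulr_ge0 ?powR_ge0 ?expR_ge0. Qed.

Lemma heat_kernel_le w t : 0 < t -> heat_kernel w t <= (4 * pi * t) `^ (- (n%:R / 2)).
Proof.
move=> t0; rewrite /heat_kernel t0 ler_piMr ?powR_ge0 // expR_le1.
by rewrite mulNr oppr_le0 divr_ge0 ?sqnorm_ge0 // !mulr_ge0 ?pi_ge0 ?ltW.
Qed.

(* The Gaussian factor loses at most [e^(-1/4)] because [|v|^2 <= 2|w|^2 + 2|v - w|^2]
   and [s >= 2t] absorbs the factor 2; the prefactor loses [3^(-n/2)] as [s <= 3t]. *)
Lemma heat_kernel_harnack w v t s : 0 < t -> 2 * t <= s <= 3 * t ->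
  sqnorm (v - w) <= t -> heat_harnack_const * heat_kernel w t <= heat_kernel v s.
Proof.
move=> t0 /andP[s2 s3] vw.
have s0 : 0 < s by nra.
have pi0 : 0 < pi :> R by exact: pi_gt0.
rewrite /heat_kernel t0 s0 /heat_harnack_const mulrACA; apply: ler_pM.
- by rewrite mulr_ge0 ?powR_ge0.
- by rewrite mulr_ge0 ?expR_ge0.
- rewrite -powRM ?mulr_ge0 //; try nra.
  rewrite !powRN lef_pV2 ?posrE ?powR_gt0 //; try nra.
  by apply: ge0_ler_powR; rewrite ?nnegrE; try nra; rewrite divr_ge0 // ler0n.
- rewrite -expRD ler_expR !mulNr -opprD lerN2.
  have := sqnormD_le w (v - w); rewrite addrC subrK.
  have := sqnorm_ge0 w; have := sqnorm_ge0 v.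
  set W := sqnorm w; set V := sqnorm v => V0 W0 VW.
  have -> : 1 / 4 + W / (4 * t) = (t + W) / (4 * t) by field; apply/eqP; nra.
  rewrite ler_pdivrMr ?mulr_gt0 // mulrAC ler_pdivlMr ?mulr_gt0 //.
  nra.
Qed.

End heat_kernel.

Section heat_potential.
Variables (R : realType) (n : nat) (mu : {finite_measure set (borelRn R n) -> \bar R}).

Definition heat_potential (x : 'rV[R]_n) (t : R) : \bar R :=
  (\int[mu]_(y in setT) (heat_kernel (x - y) t)%:E)%E.

Lemma heat_potential_ge0 x t : (0 <= heat_potential x t)%E.
Proof. by apply: integral_ge0 => y _; rewrite lee_fin heat_kernel_ge0. Qed.

Lemma heat_potential_fin_num x t : 0 < t -> heat_potential x t \is a fin_num.
Proof.
move=> t0; rewrite ge0_fin_numE ?heat_potential_ge0 //.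
apply: (@le_lt_trans _ _ (\int[mu]_(y in setT) ((4 * pi * t) `^ (- (n%:R / 2)))%:E)%E).
  by apply: le_ge0_integral => y _; rewrite lee_fin ?heat_kernel_ge0 ?heat_kernel_le.
by rewrite integral_cst //= -(fineK (fin_num_measure mu setT measurableT)) -EFinM ltry.
Qed.

Lemma heat_potential_harnack x z t s : 0 < t -> 2 * t <= s <= 3 * t ->
  sqnorm (z - x) <= t ->
  heat_harnack_const R n * fine (heat_potential x t) <= fine (heat_potential z s).
Proof.
move=> t0 /andP[s2 s3] zx.
have s0 : 0 < s by apply: lt_le_trans s2; rewrite mulr_gt0.
have c0 := heat_harnack_const_gt0 R n.
rewrite -[heat_harnack_const R n]/(fine (heat_harnack_const R n)%:E).
rewrite -fineM ?heat_potential_fin_num //.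
apply: fine_le; rewrite ?fin_numM ?heat_potential_fin_num //.
apply: le_trans (ge0_integralZl_ge _ (ltW c0) _) _.
  by move=> y _; rewrite lee_fin heat_kernel_ge0.
apply: le_ge0_integral => y _; first by rewrite -EFinM lee_fin mulr_ge0 ?heat_kernel_ge0 ?(ltW c0).
rewrite -EFinM lee_fin.
by apply: heat_kernel_harnack; rewrite ?s2 ?s3 // opprB addrA subrK.
Qed.

End heat_potential.

Section integral_near0.
Variable R : realType.
Local Notation lebesgue := (@lebesgue_measure R).

Lemma ge0_integral_itv_split_ge (F : R -> \bar R) (a b : R) :
  (forall s, 0 <= F s)%E -> 0 < a <= b ->
  (\int[lebesgue]_(s in `]0%R, a%R[) F s + \int[lebesgue]_(s in `[a%R, b%R[) F s
    <= \int[lebesgue]_(s in `]0%R, b%R[) F s)%E.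
Proof.
move=> F0 /andP[a0 ab].
have <- : `]0, a[%classic `|` `[a, b[%classic = `]0, b[%classic :> set R.
  apply/seteqP; split => s /=; rewrite !in_itv /=.
    by case=> /andP[s0 sb]; apply/andP; split; lra.
  by move=> /andP[s0 sb]; have [sa|sa] := ltP s a; [left|right]; rewrite /= ?s0 ?sb.
apply: ge0_integral_setU_ge => //; apply/seteqP; split => s //=.
by rewrite !in_itv /= => -[/andP[_ sa] /andP[+ _]]; rewrite leNgt sa.
Qed.

(* With [H r := \int_0^r F], the integral over [[a t, b t[] is at most [H (b t) - H (a t)],
   hence at most [H r1 - inf H] once [b t <= r1]; choose [r1] with [H r1 < inf H + eta]. *)
Lemma ge0_integral_itv_small (F : R -> \bar R) (T a b : R) :
  0 < T -> 0 < a <= b -> (forall s, 0 <= F s)%E ->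
  (\int[lebesgue]_(s in `]0%R, T%R[) F s < +oo)%E ->
  forall eta, 0 < eta -> \forall t \near 0^'+,
    (\int[lebesgue]_(s in `[(a * t)%R, (b * t)%R[) F s <= eta%:E)%E.
Proof.
move=> T0 /andP[a0 ab] F0 FT eta eta0.
have b0 : 0 < b := lt_le_trans a0 ab.
pose H r := (\int[lebesgue]_(s in `]0%R, r%R[) F s)%E.
have H0 r : (0 <= H r)%E by apply: integral_ge0.
have le_H r1 r2 : r1 <= r2 -> (H r1 <= H r2)%E.
  move=> r12; apply: ge0_le_integral_subset => // s /=.
  by rewrite !in_itv /= => /andP[-> /lt_le_trans]; apply.
have H_fin r : r <= T -> H r \is a fin_num.
  by move=> rT; rewrite ge0_fin_numE // (le_lt_trans (le_H _ _ rT)).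
pose E := [set fine (H r) | r in `]0, T]].
have E0 : E !=set0 by exists (fine (H T)), T => //=; rewrite in_itv /= T0 lexx.
have E_lb : has_lbound E by exists 0 => _ [r _ <-]; rewrite fine_ge0.
have [_ [r1 + <-] Hr1] := inf_adherent eta0 (conj E0 E_lb).
rewrite /= in_itv /= => /andP[r10 r1T].
near=> t.
have t0 : 0 < t by near: t; exact: nbhs_right_gt.
have btr1 : b * t <= r1.
  by rewrite -ler_pdivlMl //; near: t; apply: nbhs_right_le; rewrite mulr_gt0 ?invr_gt0.
have at0 : 0 < a * t by rewrite mulr_gt0.
have atT : a * t <= T by rewrite (le_trans _ r1T) // (le_trans _ btr1) // ler_pM2r.
have abt : 0 < a * t <= b * t by rewrite at0 ler_pM2r.
have H_inc := ge0_integral_itv_split_ge F0 abt.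
rewrite -/(H (a * t)) -/(H (b * t)) in H_inc.
rewrite -(leeD2lE _ _ (H_fin _ atT)) (le_trans H_inc) //.
rewrite -(fineK (H_fin _ atT)) -(fineK (H_fin _ (le_trans btr1 r1T))) -EFinD lee_fin.
have H_inf : inf E <= fine (H (a * t)).
  apply: ge_inf => //; exists (a * t) => //=; rewrite in_itv /= atT andbT.
  by rewrite mulr_gt0.
have := fine_le (H_fin _ (le_trans btr1 r1T)) (H_fin _ r1T) (le_H _ _ btr1).
lra.
Unshelve. all: by end_near.
Qed.

End integral_near0.

Lemma ler_mul_powRN_of_powR (R : realType) (u e t b p : R) :
  0 <= u -> 0 <= e -> 0 < t -> 0 < p ->
  u `^ p * t `^ b <= e `^ p -> u <= e * t `^ (- (b / p)).
Proof.
move=> u0 e0 t0 p0 up.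
have etb0 : 0 <= e * t `^ (- (b / p)) by rewrite mulr_ge0 ?powR_ge0.
rewrite leNgt; apply/negP => /(gt0_ltr_powR p0 etb0 u0); apply/negP; rewrite -leNgt.
rewrite powRM ?powR_ge0 // -powRrM mulNr divfK ?gt_eqF //.
by rewrite powRN ler_pdivlMr ?powR_gt0.
Qed.

Lemma norm_sup_image_le (R : realType) (T : Type) (K : set T) (f : T -> R) (B : R) :
  0 <= B -> (forall x, K x -> 0 <= f x <= B) -> `|sup (f @` K)| <= B.
Proof.
move=> B0 fB; have [->|/set0P[x0 Kx0]] := eqVneq K set0.
  by rewrite image_set0 sup0 normr0.
have fK_ub : ubound (f @` K) B by move=> _ [x Kx <-]; case/andP: (fB x Kx).
have f0 : 0 <= f x0 by case/andP: (fB x0 Kx0).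
rewrite ger0_norm; first by apply: ge_sup => //; exists (f x0), x0.
by apply: le_trans f0 (ub_le_sup _ _); [exists B | exists x0].
Qed.

Section heat_potential_Lp.
Variables (R : realType) (n : nat) (Omega : set 'rV[R]_n) (p T : R).
Variables (mu : {finite_measure set (borelRn R n) -> \bar R}) (u : 'rV[R]_n -> R -> R).
Hypothesis n_gt0 : (0 < n)%N.
Hypothesis p_ge0 : 0 <= p.
Hypothesis uE : forall x t, Omega x -> 0 < t < T -> u x t = fine (heat_potential mu x t).

Let F s := lebesgue_iint (fun x => (\1_Omega x * `|u x s| `^ p)%:E).

Definition Lp_slab_const : R := heat_harnack_const R n `^ p * (2 / n%:R) ^+ n.

Lemma Lp_slab_const_gt0 : 0 < Lp_slab_const.
Proof.
by rewrite mulr_gt0 ?powR_gt0 ?heat_harnack_const_gt0 // exprn_gt0 // divr_gt0 ?ltr0n.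
Qed.

Lemma heat_potential_Lp_ge0 x t : Omega x -> 0 < t < T -> 0 <= u x t.
Proof. by move=> Ox tT; rewrite uE // fine_ge0 // heat_potential_ge0. Qed.

Lemma heat_potential_Lp_harnack x z t s : Omega x -> Omega z -> 0 < t ->
  2 * t <= s <= 3 * t -> s < T -> sqnorm (z - x) <= t ->
  heat_harnack_const R n * u x t <= u z s.
Proof.
move=> Ox Oz t0 /andP[s2 s3] sT zx.
have s0 : 0 < s by nra.
have tT : t < T by nra.
by rewrite !uE ?t0 ?s0 ?tT ?sT // heat_potential_harnack // s2 s3.
Qed.

Lemma Lp_slice_ge x t s : 0 < t -> 3 * t <= T -> ball x (t `^ 2^-1) `<=` Omega ->
  2 * t <= s < 3 * t ->
  (((heat_harnack_const R n * u x t) `^ p * (2 * (t `^ 2^-1 / n%:R)) ^+ n)%:E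
    <= F s)%E.
Proof.
move=> t0 tT BO /andP[s2 s3].
have rho0 : 0 < t `^ 2^-1 / n%:R by rewrite divr_gt0 ?powR_gt0 ?ltr0n.
have rho_le : t `^ 2^-1 / n%:R <= t `^ 2^-1.
  by rewrite ler_pdivrMr ?ltr0n // ler_peMr ?powR_ge0 // ler1n.
rewrite -(lebesgue_iint_ball x) ?powR_ge0 //; apply: le_lebesgue_iint => v.
  by rewrite lee_fin mulr_ge0 ?powR_ge0 ?indic_ge0.
rewrite !indicE; case: (boolP (v \in (ball x _ : set _))) => [/set_mem xv|_]; last first.
  by rewrite mulr0 lee_fin mulr_ge0 ?powR_ge0 // ler0n.
have Ox : Omega x by apply: BO; exact: ballxx (powR_gt0 _ _).
have Ov : Omega v by apply: BO; move: xv; exact: le_ball.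
have sqrt_t : (t `^ 2^-1) ^+ 2 = t.
  by rewrite -powR_mulrn ?powR_ge0 // -powRrM mulVf // powRr1 // ltW.
have vx : sqnorm (v - x) <= t.
  apply: le_trans (sqnorm_ball xv) _; rewrite expr_div_n sqrt_t.
  rewrite (_ : _ * _ = t / n%:R); last by field; rewrite pnatr_eq0 -lt0n.
  by rewrite ler_pdivrMr ?ltr0n // ler_pMr // ler1n.
have cu_le : heat_harnack_const R n * u x t <= u v s.
  by apply: heat_potential_Lp_harnack (lt_le_trans s3 tT) vx; rewrite // s2 ltW.
have cu0 : 0 <= heat_harnack_const R n * u x t.
  rewrite mulr_ge0 ?heat_potential_Lp_ge0 ?(ltW (heat_harnack_const_gt0 R n)) // t0 /=.
  lra.
rewrite [true%:R]/= mulr1 (mem_set Ov) mul1r lee_fin ger0_norm ?(le_trans cu0) //.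
by apply: (ge0_ler_powR p_ge0) => //; rewrite nnegrE // (le_trans cu0).
Qed.

Lemma Lp_slab_ge x t : 0 < t -> 3 * t <= T -> ball x (t `^ 2^-1) `<=` Omega ->
  ((u x t `^ p * t `^ ((n%:R + 2) / 2) * Lp_slab_const)%:E
    <= \int[lebesgue_measure]_(s in `[(2 * t)%R, (3 * t)%R[) F s)%E.
Proof.
move=> t0 tT BO.
have c0 := ltW (heat_harnack_const_gt0 R n).
have u0 : 0 <= u x t.
  by apply: heat_potential_Lp_ge0; [apply: BO; exact: ballxx (powR_gt0 _ _) | lra].
pose C := (heat_harnack_const R n * u x t) `^ p * (2 * (t `^ 2^-1 / n%:R)) ^+ n.
have C0 : 0 <= C by rewrite mulr_ge0 ?powR_ge0 // exprn_ge0 // mulr_ge0 // divr_ge0 ?powR_ge0.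
have -> : u x t `^ p * t `^ ((n%:R + 2) / 2) * Lp_slab_const = C * t.
  have sqrt_tn : (t `^ 2^-1) ^+ n = t `^ (n%:R / 2).
    by rewrite -powR_mulrn ?powR_ge0 // -powRrM mulrC.
  have tn2 : t `^ ((n%:R + 2) / 2) = t `^ (n%:R / 2) * t.
    rewrite -{3}(powRr1 (ltW t0)) -powRD; last by rewrite gt_eqF ?implybT.
    by congr (t `^ _); field.
  by rewrite /C /Lp_slab_const powRM // tn2 -sqrt_tn !exprMn; ring.
have C_int : (\int[lebesgue_measure]_(s in `[(2 * t)%R, (3 * t)%R[) C%:E = (C * t)%:E)%E.
  rewrite integral_cst //= lebesgue_measure_itv /= lte_fin ifT; last by lra.
  by rewrite -EFinD -EFinM; congr (C * _)%:E; ring.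
rewrite -C_int; apply: le_ge0_integral => s; first by rewrite lee_fin.
by rewrite /= in_itv /= => /andP[s2 s3]; apply: Lp_slice_ge; rewrite ?s2.
Qed.

End heat_potential_Lp.

Unset Implicit Arguments.

Theorem lemma2p4 (R : realType) (n : nat) (Omega : set 'rV[R]_n) (p T : R)
  (mu : {finite_measure set (borelRn R n) -> \bar R})
  (u : 'rV[R]_n -> R -> R) :
  (0 < n)%N -> open Omega -> 1 <= p -> 0 < T ->
  (forall x t, Omega x -> 0 < t < T ->
     u x t = fine (\int[mu]_(y in setT) (heat_kernel (x - y) t)%:E)) ->
  (\int[@lebesgue_measure R]_(t in `]0%R, T%R[)
      lebesgue_iint (fun x => (\1_Omega x * `|u x t| `^ p)%:E) < +oo)%E ->
  forall K : set 'rV[R]_n, compact K -> K `<=` Omega ->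
    (fun t => sup [set u x t | x in K])
      =o_ ((0 : R)^'+) (fun t => t `^ (- ((n%:R + 2) / (2 * p)))).
Proof.
move=> n0 oO p1 T0 uE Fint K cK KO.
have p0 : 0 < p := lt_le_trans ltr01 p1.
have [r r0 Kr] := compact_open_uniform_ball cK oO KO.
have k0 := Lp_slab_const_gt0 p n0.
apply/eqoP => e e0.
have F0 s : (0 <= lebesgue_iint (fun x => (\1_Omega x * `|u x s| `^ p)%:E))%E.
  by apply: lebesgue_iint_ge0 => x; rewrite lee_fin mulr_ge0 ?indic_ge0 ?powR_ge0.
have eta0 : 0 < e `^ p * Lp_slab_const n p by rewrite mulr_gt0 ?powR_gt0.
have two_le3 : (0 : R) < (2 : R) <= (3 : R) by apply/andP; split; lra.
have slab_small := ge0_integral_itv_small T0 two_le3 F0 Fint eta0.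
near=> t.
have t0 : 0 < t by near: t; exact: nbhs_right_gt.
have tT : 3 * t <= T.
  by rewrite -ler_pdivlMl //; near: t; apply: nbhs_right_le; rewrite mulr_gt0 ?invr_gt0.
have BO x : K x -> ball x (t `^ 2^-1) `<=` Omega.
  move=> Kx; apply: subset_trans (Kr x Kx); apply: le_ball.
  by near: t; apply: (cvgr_le 0) => //; exact: powR_cvg0.
rewrite [X in _ * X]ger0_norm ?powR_ge0 //.
apply: norm_sup_image_le => [|x Kx]; first by rewrite mulr_ge0 ?powR_ge0 ?ltW.
have ux0 : 0 <= u x t by apply: (heat_potential_Lp_ge0 uE (KO x Kx)); lra.
rewrite ux0 invfM mulrA; apply: ler_mul_powRN_of_powR => //; first exact: ltW.
rewrite -(ler_pM2r k0) -lee_fin.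
apply: le_trans (Lp_slab_ge n0 (ltW p0) uE t0 tT (BO x Kx)) _.
by near: t; exact: slab_small.
Unshelve. all: by end_near.
Qed.
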